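(* Let $M_-,M_+\in\mathbb{Z}$ with $M:=M_-+M_+\ge0$, and let $V_{M_-,M_+}\in\mathbb{R}^{(M+1)\times(M+1)}$ be the Vandermonde matrix with entries $(V_{M_-,M_+})_{ij}=(i-1-M_-)^{j-1}$, $1\le i,j\le M+1$ (with $0^0=1$). Then $V_{M_-,M_+}$ is invertible and: (i) for all $i,j\in\{1,\dots,M+1\}$, $$(V_{M_-,M_+}^{-1})_{ij}=\sum_{n=0}^{M+1-i}(M_-)^n\binom{n+i-1}{n}(V_{0,M}^{-1})_{i+n,j};$$ (ii) for all $i,j\in\{1,\dots,M+1\}$, $$(V_{0,M}^{-1})_{ij}=(-1)^{i+j}\sum_{k=1}^{M+1}\frac{1}{(k-1)!}\binom{k-1}{j-1}\left[{k-1\atop i-1}\right];$$ (iii) defining $\nu_{M_-,M_+,m,k}:=\sum_{\ell=-M_-}^{M_+}(V_{M_-,M_+}^{-1})_{m+1,\ell+M_-+1}\,\ell^k$, one has $\nu_{M_-,M_+,m,k}=\delta_{mk}$ for $0\le k\le M$, $0\le m\le M$; (iv) $\sum_{m=0}^{M}\nu_{M_-,M_+,m,k}\,\ell^m=\ell^k$ for all $k\in\mathbb{N}_0$ and all $\ell\in\{-M_-,\dots,M_+\}$.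
   Context: $\left[{n\atop k}\right]$ denotes the unsigned Stirling numbers of the first kind (number of permutations of $n$ elements with exactly $k$ cycles), satisfying $\left[{n\atop 0}\right]=\delta_{n0}$ and $\left[{n+1\atop k}\right]=n\left[{n\atop k}\right]+\left[{n\atop k-1}\right]$. $V_{0,M}$ is the matrix above with $M_-=0$, $M_+=M$, i.e. entries $(i-1)^{j-1}$. *)

From mathcomp Require Import all_boot all_order all_algebra.
Set Implicit Arguments. Unset Strict Implicit. Unset Printing Implicit Defensive.
Import Order.TTheory GRing.Theory Num.Theory.
Local Open Scope ring_scope.

Fixpoint stirling1 (n k : nat) : nat :=
  match n, k with
  | 0, 0 => 1
  | 0, _.+1 => 0
  | _.+1, 0 => 0
  | n'.+1, k'.+1 => (n' * stirling1 n' k'.+1 + stirling1 n' k')%N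
  end.

(* Vandermonde matrix V_{Mm, M - Mm} of size n = M+1, 0-based indices:
   entry (i, j) = (i - Mm)^j, with 0^0 = 1 (expr0). *)
Definition vdm (R : ringType) (Mm : int) (n : nat) : 'M[R]_n :=
  \matrix_(i < n, j < n) (((i : nat)%:Z - Mm)%:~R) ^+ j.

(* nu_{Mm,Mp,m,k} = sum_{l=-Mm}^{Mp} (V^{-1})_{m+1, l+Mm+1} l^k, where M = Mm+Mp;
   here the summation index is l' = l + Mm in {0..M}. *)
Definition nu (R : fieldType) (Mm : int) (M : nat) (m k : nat) : R :=
  \sum_(l < M.+1)
    invmx (vdm R Mm M.+1) (inord m) l * ((((l : nat)%:Z - Mm)%:~R) ^+ k).

From mathcomp Require Import all_boot all_order all_algebra.
From mathcomp Require Import ring zify.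
Import Order.TTheory GRing.Theory Num.Theory.
Local Open Scope ring_scope.

(** By the binomial theorem, shifting the nodes of a Vandermonde matrix by [d]
  multiplies it on the right by the upper triangular Pascal matrix [P d], with
  entries [C(j, i) d^(j - i)]; these satisfy [P c *m P d = P (c + d)].  Hence
  [V_(Mm, Mp) = V_(0, M) *m P (- Mm)] and [V_(Mm, Mp)^-1 = P Mm *m V_(0, M)^-1],
  which is (i) written out.  For (ii), the Stirling numbers of the first kind
  expand the rising factorial, so evaluated at [- r] they give [(-1)^k r^_k];
  with [r^_k / k! = C(r, k)] this makes [V_(0, M) *m W] the transpose of
  [P (-1) *m P 1 = 1].  Parts (iii) and (iv) are [V^-1 V = 1] and [V V^-1 = 1]. *)

Definition pow_mx (R : pzRingType) n (x : nat -> R) : 'M[R]_n :=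
  \matrix_(i < n, j < n) x i ^+ j.

Definition pascal_mx (R : pzRingType) n (d : R) : 'M[R]_n :=
  \matrix_(i < n, j < n) ('C(j, i)%:R * d ^+ (j - i)).

Arguments pow_mx {R} n x.
Arguments pascal_mx {R} n d.

Section PascalShift.
Variable R : comPzRingType.

Lemma pow_mx_pascal n (x : nat -> R) d :
  pow_mx n x *m pascal_mx n d = pow_mx n (fun r => x r + d).
Proof.
apply/matrixP => r j; rewrite !mxE (addrC (x r)) exprDn.
rewrite (big_ord_widen n (fun i => d ^+ (j - i) * x r ^+ i *+ 'C(j, i))) //.
rewrite [RHS]big_mkcond; apply: eq_bigr => i _; rewrite !mxE.
case: ifP => [_|]; first by rewrite -mulr_natr; ring.
by rewrite ltnS leqNgt => /negbFE /bin_small ->; rewrite mul0r mulr0.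
Qed.

Lemma pascal_mx0 n : pascal_mx n (0 : R) = 1%:M.
Proof.
apply/matrixP => i j; rewrite !mxE expr0n subn_eq0.
case: (ltngtP i j) => [ij|ji|/val_inj ->]; last by rewrite binn mulr1 eqxx.
- by rewrite mulr0; case: eqP ij => // ->; rewrite ltnn.
- by rewrite bin_small // mul0r; case: eqP ji => // ->; rewrite ltnn.
Qed.

Lemma sum_stirling1_rising (y : R) k N : (k <= N)%N ->
  \sum_(i < N.+1) (stirling1 k i)%:R * y ^+ i = \prod_(t < k) (y + t%:R).
Proof.
elim: k N => [|k IH] [|N] // hk.
- by rewrite big_ord1 expr0 mulr1 big_ord0.
- by rewrite big_ord_recl big1 ?big_ord0 ?addr0 ?mulr1 // => i _; rewrite mul0r.
have IHS := IH N.+1 (leqW hk); rewrite big_ord_recl /= in IHS.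
have sk0 : (stirling1 k 0)%:R * k%:R = 0 :> R.
  by case: k {IH IHS hk} => [|k]; rewrite ?mulr0 ?mul0r.
rewrite [RHS]big_ord_recr /= mulrDr -{1}(IH N hk) -IHS mulrDl expr0 mulr1 sk0 add0r.
rewrite big_ord_recl mul0r add0r !big_distrl -big_split /=.
by apply: eq_bigr => i _; rewrite natrD natrM exprS; ring.
Qed.

Lemma prod_rising_Nnat (r k : nat) :
  \prod_(t < k) (- r%:R + t%:R : R) = (-1) ^+ k * (r ^_ k)%:R.
Proof.
elim: k => [|k IH]; first by rewrite big_ord0 expr0 ffactn0 mul1r.
rewrite big_ord_recr /= IH ffactnSr natrM exprS.
have [kr|rk] := leqP k r; first by rewrite natrB //; ring.
by rewrite ffact_small // !(mul0r, mulr0).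
Qed.

Lemma sum_stirling1_Nnat (r : nat) k N : (k <= N)%N ->
  \sum_(i < N.+1) (stirling1 k i)%:R * (- r%:R : R) ^+ i = (-1) ^+ k * (r ^_ k)%:R.
Proof. by move=> kN; rewrite sum_stirling1_rising // prod_rising_Nnat. Qed.

End PascalShift.

Definition stirling_inv_mx (R : fieldType) n : 'M[R]_n :=
  \matrix_(i < n, j < n) ((-1) ^+ (i + j) *
     \sum_(k < n) (k`!%:R)^-1 * 'C(k, j)%:R * (stirling1 k i)%:R).

Lemma pow_mx_unit (F : fieldType) n (x : nat -> F) :
  {in gtn n &, injective x} -> pow_mx n x \in unitmx.
Proof.
move=> x_inj; have -> : pow_mx n x = (Vandermonde n (\row_(j < n) x j))^T.
  by apply/matrixP => i j; rewrite !mxE.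
rewrite unitmxE det_tr det_Vandermonde unitfE.
apply/prodf_neq0 => i _; apply/prodf_neq0 => j ij; rewrite !mxE subr_eq0.
by apply: contraTneq ij => /x_inj -> //; rewrite ?ltnn ?inE.
Qed.

Section NatNodes.
Variable F : numFieldType.

Lemma pow_mx_nat_unit n : pow_mx n (fun r => r%:R : F) \in unitmx.
Proof. by apply: pow_mx_unit => i j _ _ /eqP; rewrite eqr_nat => /eqP. Qed.

Lemma pascal_mxD n (c d : F) : pascal_mx n c *m pascal_mx n d = pascal_mx n (c + d).
Proof.
apply: (can_inj (mulKmx (pow_mx_nat_unit n))); rewrite mulmxA !pow_mx_pascal.
by apply/matrixP => i j; rewrite !mxE addrA.
Qed.

Lemma pow_mx_nat_stirling_inv N :
  pow_mx N.+1 (fun r => r%:R : F) *m stirling_inv_mx F N.+1 = 1%:M.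
Proof.
have -> : 1%:M = (pascal_mx N.+1 (-1 : F) *m pascal_mx N.+1 1)^T.
  by rewrite pascal_mxD addNr pascal_mx0 trmx1.
apply/matrixP => r j; rewrite !mxE.
under eq_bigr => i _ do rewrite !mxE big_distrr big_distrr /=.
rewrite exchange_big /=; apply: eq_bigr => k _; rewrite !mxE expr1n mulr1.
transitivity ((k`!%:R : F)^-1 * 'C(k, j)%:R * (-1) ^+ j *
   \sum_(i < N.+1) (stirling1 k i)%:R * (- (r : nat)%:R) ^+ i).
  rewrite big_distrr; apply: eq_bigr => i _ /=.
  by rewrite exprD (exprNn (r%:R : F)); ring.
rewrite sum_stirling1_Nnat; last by rewrite -ltnS.
rewrite -bin_ffact natrM.
have [jk|kj] := leqP j k; last by rewrite bin_small // !(mul0r, mulr0).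
have kf : (k`!%:R : F) != 0 by rewrite pnatr_eq0 -lt0n fact_gt0.
have sign : (-1) ^+ j * (-1) ^+ k = (-1) ^+ (k - j) :> F.
  by rewrite -exprD -signr_odd -[in RHS]signr_odd oddD oddB // addbC.
by rewrite -sign; field.
Qed.

End NatNodes.

Lemma pascal_mulmxE (R : pzRingType) n (d : R) (A : 'M[R]_n.+1) (i j : 'I_n.+1) :
  (pascal_mx n.+1 d *m A) i j =
  \sum_(0 <= t < n.+1 - i) d ^+ t * 'C(t + i, t)%:R * A (inord (i + t)) j.
Proof.
pose F a := 'C(a, i)%:R * d ^+ (a - i) * A (inord a) j.
transitivity (\sum_(0 <= a < n.+1) F a).
  by rewrite mxE big_mkord; apply: eq_bigr => a _; rewrite /F mxE inord_val.
rewrite (big_cat_nat _ (n := i)) //=; last exact: ltnW.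
rewrite big1_seq ?add0r; last first.
  by move=> a; rewrite mem_index_iota /F => /andP[_ /bin_small ->]; rewrite !mul0r.
rewrite -{1}(add0n i) big_addn; apply: eq_big_nat => t _.
by rewrite /F addnK addnC -bin_sub ?leq_addr // addKn mulr_natl -mulr_natr.
Qed.

Lemma vdm_pow_mx_nat (R : comNzRingType) (c : int) n :
  vdm R c n = pow_mx n (fun r => r%:R) *m pascal_mx n (- c%:~R).
Proof. by rewrite pow_mx_pascal; apply/matrixP => i j; rewrite !mxE intrB. Qed.

Section VandermondeInverse.
Variables (F : numFieldType) (c : int) (N : nat).

Lemma vdm_mulmx_inv :
  vdm F c N.+1 *m (pascal_mx N.+1 c%:~R *m stirling_inv_mx F N.+1) = 1%:M.
Proof.
rewrite vdm_pow_mx_nat -mulmxA (mulmxA (pascal_mx _ _)) pascal_mxD addNr.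
by rewrite pascal_mx0 mul1mx pow_mx_nat_stirling_inv.
Qed.

Lemma vdm_unit : vdm F c N.+1 \in unitmx.
Proof. by have [] := mulmx1_unit vdm_mulmx_inv. Qed.

Lemma invmx_vdm :
  invmx (vdm F c N.+1) = pascal_mx N.+1 c%:~R *m stirling_inv_mx F N.+1.
Proof. by rewrite -[invmx _]mulmx1 -vdm_mulmx_inv mulKmx ?vdm_unit. Qed.

End VandermondeInverse.

Lemma invmx_vdm0 (F : numFieldType) N : invmx (vdm F 0 N.+1) = stirling_inv_mx F N.+1.
Proof. by rewrite invmx_vdm pascal_mx0 mul1mx. Qed.

Section Nu.
Variables (F : fieldType) (c : int) (M : nat).
Hypothesis vdm_unit : vdm F c M.+1 \in unitmx.

Lemma nu_kronecker m k : (m <= M)%N -> (k <= M)%N -> nu F c M m k = (m == k)%:R.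
Proof.
move=> mM kM; have -> : nu F c M m k =
    (invmx (vdm F c M.+1) *m vdm F c M.+1) (inord m) (inord k).
  by rewrite mxE; apply: eq_bigr => l _; rewrite mxE inordK.
by rewrite mulVmx // mxE -val_eqE /= !inordK.
Qed.

Lemma sum_nu_exprz k (l : int) : - c <= l <= M%:Z - c ->
  \sum_(m < M.+1) nu F c M m k * l%:~R ^+ m = l%:~R ^+ k.
Proof.
move=> /andP[cl lM]; pose l0 : 'I_M.+1 := inord (absz (l + c)).
have l0E : (l0 : nat)%:Z - c = l by rewrite inordK; [rewrite gez0_abs ?addrK | ]; lia.
transitivity (\sum_(m < M.+1) nu F c M m k * vdm F c M.+1 l0 m).
  by apply: eq_bigr => m _; rewrite mxE l0E.
under eq_bigr => m _ do rewrite /nu inord_val big_distrl.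
rewrite exchange_big /=.
transitivity (\sum_(l' < M.+1) (vdm F c M.+1 *m invmx (vdm F c M.+1)) l0 l' *
   (((l' : nat)%:Z - c)%:~R : F) ^+ k).
  apply: eq_bigr => l' _; rewrite mxE big_distrl.
  by apply: eq_bigr => m _ /=; rewrite [LHS]mulrC mulrA.
rewrite mulmxV // (bigD1 l0) //= big1 ?addr0 => [|l' l'l0].
  by rewrite mxE eqxx mul1r l0E.
by rewrite mxE eq_sym (negbTE l'l0) mul0r.
Qed.

End Nu.

Theorem lemma7 (R : realFieldType) (Mm Mp : int) (M : nat)
  (hM : Mm + Mp = M%:Z) :
  vdm R Mm M.+1 \in unitmx /\
  (forall i j : 'I_M.+1,
     invmx (vdm R Mm M.+1) i j =
     \sum_(0 <= n < M.+1 - i)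
        (Mm%:~R) ^+ n * ('C(n + i, n))%:R * invmx (vdm R 0 M.+1) (inord (i + n)) j) /\
  (forall i j : 'I_M.+1,
     invmx (vdm R 0 M.+1) i j =
     (-1) ^+ (i + j) *
       \sum_(k < M.+1) (k`!%:R)^-1 * ('C(k, j))%:R * (stirling1 k i)%:R) /\
  (forall m k : nat, (m <= M)%N -> (k <= M)%N ->
     nu R Mm M m k = (m == k)%:R) /\
  (forall (k : nat) (l : int), - Mm <= l <= Mp ->
     \sum_(m < M.+1) nu R Mm M m k * (l%:~R) ^+ m = (l%:~R) ^+ k).
Proof.
have V_unit := vdm_unit R Mm M.
split=> //; split.
  by move=> i j; rewrite invmx_vdm pascal_mulmxE invmx_vdm0.
split; first by move=> i j; rewrite invmx_vdm0 mxE.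
split; first exact: nu_kronecker.
by move=> k l range; apply: sum_nu_exprz; rewrite // -hM addrAC subrr add0r.
Qed.
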